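(* Consider the spacetime $\mathbb{R}\times\mathbb{R}^3$ with coordinates $(t,x^1,x^2,x^3)$ and metric of signature $(-,+,+,+)$ $$ds^2=-\alpha^2\,dt^2+\delta_{ij}\,(dx^i-\beta^i dt)(dx^j-\beta^j dt),$$ with lapse $\alpha\equiv 1$, flat time-independent spatial metric $\gamma_{ij}=\delta_{ij}$ on every slice $t=\text{const}$, and irrotational shift given by a smooth scalar potential $\Phi(t,x)$ through $\beta_i=-\partial_i\Phi$ (i.e. $\boldsymbol{\beta}^\flat=-d\Phi$ on each slice). Then the stress–energy tensor $T^\mu{}_\nu=G^\mu{}_\nu/\kappa$ of this spacetime is of Hawking–Ellis Type I at every point.
   Context: $G^\mu{}_\nu$ is the mixed Einstein tensor of the metric and $\kappa>0$ is Einstein's coupling constant (zero cosmological constant). A symmetric tensor $T_{\mu\nu}$ at a point, viewed as the linear map $T^\mu{}_\nu$, is of Hawking–Ellis Type I if $T^\mu{}_\nu$ has four real eigenvalues and admits a real timelike eigenvector, equivalently there is an orthonormal frame in which $T^{\hat\mu}{}_{\hat\nu}=\mathrm{diag}(-\varrho,p_1,p_2,p_3)$ with all entries real. *)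

From HB Require Import structures.
From mathcomp Require Import all_boot all_order all_algebra.
From mathcomp Require Import all_classical all_reals all_analysis.
Set Implicit Arguments. Unset Strict Implicit. Unset Printing Implicit Defensive.
Import Order.TTheory GRing.Theory Num.Theory.
Import numFieldNormedType.Exports.
Local Open Scope ring_scope.

(* Spacetime points are rows x = (t, x^1, x^2, x^3) : 'rV[R]_4; index 0 is t. *)

Section Geom.
Variable R : realType.
Notation pt := 'rV[R]_4.

Definition ev (mu : 'I_4) : pt := delta_mx 0 mu.

Definition pd (mu : 'I_4) (f : pt -> R) : pt -> R := fun x => 'D_(ev mu) f x.

Fixpoint ipd (s : seq 'I_4) (f : pt -> R) : pt -> R :=
  match s with [::] => f | mu :: s' => pd mu (ipd s' f) end.

Definition smooth (f : pt -> R) : Prop :=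
  forall (s : seq 'I_4) (x : pt), differentiable (ipd s f) x.

Definition sp (i : 'I_3) : 'I_4 := lift ord0 i.

(* 3+1 metric  ds^2 = -alpha^2 dt^2 + delta_ij (dx^i - beta^i dt)(dx^j - beta^j dt) *)
Definition adm_metric (alpha : pt -> R) (beta : pt -> 'I_3 -> R) (x : pt) : 'M[R]_4 :=
  let dt := fun mu : 'I_4 => (mu == ord0)%:R : R in
  let w := fun (i : 'I_3) (mu : 'I_4) => (mu == sp i)%:R - beta x i * dt mu in
  \matrix_(mu, nu) (- (alpha x ^+ 2) * dt mu * dt nu + \sum_(i < 3) w i mu * w i nu).

Variable g : pt -> 'M[R]_4.
Definition ginv (x : pt) : 'M[R]_4 := invmx (g x).

Definition christoffel (a b c : 'I_4) (x : pt) : R :=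
  2^-1 * \sum_(d < 4) ginv x a d *
    (pd b (fun y => g y d c) x + pd c (fun y => g y d b) x - pd d (fun y => g y b c) x).

Definition ricci (x : pt) : 'M[R]_4 :=
  \matrix_(b, d) \sum_(a < 4)
     (pd a (christoffel a d b) x - pd d (christoffel a a b) x
      + \sum_(e < 4) (christoffel a a e x * christoffel e d b x
                      - christoffel a d e x * christoffel e a b x)).

Definition ricci_scalar (x : pt) : R :=
  \sum_(a < 4) \sum_(b < 4) ginv x a b * ricci x a b.

Definition einstein_mixed (x : pt) : 'M[R]_4 :=
  ginv x *m ricci x - (2^-1 * ricci_scalar x) *: 1%:M.
End Geom.

Definition HE_typeI (R : realType) (gx T : 'M[R]_4) : Prop :=
  (exists r : 'I_4 -> R, char_poly T = \prod_(i < 4) ('X - (r i)%:P)) /\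
  (exists (v : 'cV[R]_4) (lam : R),
      (v^T *m gx *m v) ord0 ord0 < 0 /\ T *m v = lam *: v).

(* With unit lapse and flat slices, the unit normal to the slices is
   n = (1, -grad Phi) and the extrinsic curvature is, up to sign, the spatial
   Hessian of Phi.  In the orthonormal frame (n, d_1, d_2, d_3) the Einstein
   tensor is therefore block diagonal: its spatial block is symmetric, and its
   mixed components G(d_i, n) are the momentum constraint D_j K^j_i - D_i K,
   which vanishes because third partial derivatives of Phi commute.  A block
   matrix diag(lambda, S) with S real symmetric has real eigenvalues, and n is
   a timelike eigenvector.  The Christoffel symbols and the Ricci tensor are
   computed explicitly; det g = -1 makes the trace Gamma^a_ab vanish. *)

From HB Require Import structures.
From mathcomp Require Import all_boot all_order all_algebra.
From mathcomp Require Import all_classical all_reals all_analysis.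
From mathcomp Require Import complex ring lra.
Set Implicit Arguments. Unset Strict Implicit. Unset Printing Implicit Defensive.
Import Order.TTheory GRing.Theory Num.Theory.
Import numFieldNormedType.Exports.
Local Open Scope classical_set_scope.
Local Open Scope ring_scope.

Lemma char_poly_conj (R : comUnitRingType) n (P A : 'M[R]_n) : P \in unitmx ->
  char_poly (P *m A *m invmx P) = char_poly A.
Proof.
move=> Pu; rewrite /char_poly /char_poly_mx.
set Pp := map_mx polyC P; set Qp := map_mx polyC (invmx P).
have PQ : Pp *m Qp = 1%:M by rewrite -map_mxM mulmxV // map_mx1.
have -> : 'X%:M - map_mx polyC (P *m A *m invmx P) =
          Pp *m ('X%:M - map_mx polyC A) *m Qp.
  by rewrite !map_mxM mulmxBr mulmxBl scalar_mxC -[_ *m Pp *m Qp]mulmxA PQ mulmx1.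
by rewrite !det_mulmx mulrAC -det_mulmx PQ det1 mul1r.
Qed.

Lemma char_poly_row0 (R : comNzRingType) n (A : 'M[R]_n.+1) :
  (forall j, A 0 (lift 0 j) = 0) ->
  char_poly A = ('X - (A 0 0)%:P) * char_poly (row' 0 (col' 0 A)).
Proof.
move=> A0; rewrite /char_poly (expand_det_row _ 0) big_ord_recl big1 ?addr0.
  by rewrite /cofactor row'_col'_char_poly_mx !mxE mulr1n expr0 mul1r.
by move=> j _; rewrite !mxE A0 /= mulr0n subrr mul0r.
Qed.

Lemma char_poly_sym_split (R : rcfType) n (M : 'M[R]_n) : M^T = M ->
  exists r : 'I_n -> R, char_poly M = \prod_(i < n) ('X - (r i)%:P).
Proof.
move=> Msym; pose Mc := map_mx (real_complex R) M.
have Mc_herm : Mc \is hermsymmx.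
  apply: realsym_hermsym.
    apply/is_hermitianmxP/matrixP => i j; rewrite !mxE expr0 mul1r /=.
    by rewrite -{1}Msym mxE.
  by apply/mxOverP => i j; rewrite mxE; apply/complex_realP; exists (M i j).
have /orthomx_spectralP McE := hermitian_normalmx Mc_herm.
have D_real := hermitian_spectral_diag_real Mc_herm.
set P := spectralmx Mc in McE; set D := spectral_diag Mc in McE D_real.
exists (fun i => complex.Re (D 0 i)); apply: (@map_poly_inj _ _ (real_complex R)).
rewrite map_char_poly -/Mc McE -[P in _ *m P]invmxK char_poly_conj; last first.
  by rewrite unitmx_inv spectral_unit.
rewrite char_poly_trig ?diag_mx_is_trig // rmorph_prod; apply: eq_bigr => i _.
by rewrite rmorphB /= map_polyX map_polyC /= RRe_real ?(mxOverP D_real) // mxE eqxx mulr1n.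
Qed.

Section TypeI.
Variable R : realType.

Lemma typeI_of_block_conj (g T P B : 'M[R]_4) :
  P \in unitmx -> T *m P = P *m B ->
  (forall i, B ord0 (lift ord0 i) = 0) -> (forall i, B (lift ord0 i) ord0 = 0) ->
  (row' ord0 (col' ord0 B))^T = row' ord0 (col' ord0 B) ->
  (P^T *m g *m P) ord0 ord0 < 0 -> HE_typeI g T.
Proof.
move=> Pu TP B0r B0c Bsym neg; split.
  have [r Hr] := char_poly_sym_split Bsym.
  exists (fun k => if unlift ord0 k is Some i then r i else B ord0 ord0).
  have -> : T = P *m B *m invmx P by rewrite -TP mulmxK.
  rewrite char_poly_conj // char_poly_row0 // Hr big_ord_recl unlift_none.
  by congr (_ * _); apply: eq_bigr => i _; rewrite liftK.
exists (col ord0 P), (B ord0 ord0); split.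
  by move: neg; rewrite tr_col -row_mul colE mulmxA -colE -row_mul !mxE.
have Bcol0 : col ord0 B = B ord0 ord0 *: delta_mx ord0 0.
  apply/colP => a; rewrite !mxE eqxx andbT.
  by case: (unliftP ord0 a) => [i ->|->]; rewrite ?B0c ?mulr0 ?eqxx ?mulr1.
by rewrite !colE mulmxA TP -mulmxA -colE Bcol0 -scalemxAr.
Qed.

Definition minkowski_mx : 'M[R]_4 := diag_mx (\row_a (if a == ord0 then -1 else 1)).

Lemma minkowski_mxK : minkowski_mx *m minkowski_mx = 1%:M.
Proof.
rewrite mulmx_diag -diag_const_mx; congr diag_mx; apply/rowP => a.
by rewrite !mxE; case: (a == ord0); rewrite ?mulrNN mulr1.
Qed.

Lemma typeI_of_frame (g Ric P : 'M[R]_4) (k c : R) :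
  P^T *m g *m P = minkowski_mx -> Ric^T = Ric ->
  (forall i, (P^T *m Ric *m P) (lift ord0 i) ord0 = 0) ->
  HE_typeI g (k *: (invmx g *m Ric - c *: 1%:M)).
Proof.
move=> Portho Rsym Q0.
have PTgPe : P^T *m (g *m P *m minkowski_mx) = 1%:M by rewrite !mulmxA Portho minkowski_mxK.
have PTu : P^T \in unitmx by case: (mulmx1_unit PTgPe).
have gPePT : g *m (P *m minkowski_mx *m P^T) = 1%:M by rewrite !mulmxA (mulmx1C PTgPe).
have gu : g \in unitmx by case: (mulmx1_unit gPePT).
have ginvE : invmx g = P *m minkowski_mx *m P^T.
  by rewrite -[RHS](mulKmx gu) gPePT mulmx1.
set Q := P^T *m Ric *m P in Q0.
have QT : Q^T = Q by rewrite /Q !trmx_mul trmxK Rsym mulmxA.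
have TP : k *: (invmx g *m Ric - c *: 1%:M) *m P =
          P *m (k *: (minkowski_mx *m Q - c *: 1%:M)).
  rewrite -scalemxAl -scalemxAr mulmxBl mulmxBr ginvE -!scalemxAl -!scalemxAr.
  by rewrite mul1mx mulmx1 /Q !mulmxA.
clearbody Q; have Qsym a b : Q a b = Q b a by rewrite -[in LHS]QT mxE.
apply: typeI_of_block_conj TP _ _ _ _.
- by rewrite -unitmx_tr.
- by move=> i; rewrite mul_diag_mx !mxE Qsym Q0 eq_liftF mulr0n !(mulr0, subr0).
- by move=> i; rewrite mul_diag_mx !mxE Q0 lift_eqF mulr0n !(mulr0, subr0).
- by apply/matrixP => i j; rewrite mul_diag_mx !mxE Qsym !lift_eqF eq_sym.
- by rewrite Portho !mxE /= mulr1n ltrN10.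
Qed.

End TypeI.

Section Schwarz.
Context {R : realType} {V : normedModType R}.
Implicit Types (f : V -> R) (u w x : V).

Lemma is_derive_along_line f x v (t : R) : derivable f (x + t *: v) v ->
  is_derive t 1 (fun s => f (x + s *: v)) ('D_v f (x + t *: v)).
Proof.
move=> df.
have E : (fun h : R => h^-1 *: (((fun s => f (x + s *: v)) \o shift t) (h *: 1) -
                                 (fun s => f (x + s *: v)) t))
  = (fun h : R => h^-1 *: ((f \o shift (x + t *: v)) (h *: v) - f (x + t *: v))).
  apply: funext => h /=; congr (_ *: (f _ - _)).
  by rewrite scalerDl addrCA addrC [h%:A]mulr1 addrC.
by apply: DeriveDef; [rewrite /derivable E | rewrite /derive E].
Qed.

Lemma mvt_linear_approx (g dg : R -> R) (a b K M : R) : a < b ->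
  (forall s : R, is_derive s 1 g (dg s)) -> (forall s, a < s < b -> `|dg s - K| <= M) ->
  `|g b - g a - K * (b - a)| <= M * (b - a).
Proof.
move=> ab gd bd.
have gc : {within `[a, b], continuous g}.
  apply: continuous_subspaceT => s; apply: differentiable_continuous.
  by apply/derivable1_diffP; case: (gd s).
have [c cab ->] := MVT ab (fun s _ => gd s) gc.
have ba : 0 <= b - a by rewrite subr_ge0 ltW.
rewrite -mulrBl normrM (ger0_norm ba) ler_wpM2r //.
by apply: bd; rewrite !(itvP cab).
Qed.

Definition second_difference f x u w (h : R) :=
  f (x + h *: w + h *: u) - f (x + h *: u) - f (x + h *: w) + f x.

(* Mean value theorem along u, then along w at each intermediate point. *)
Lemma second_difference_approx f x u w (eps : R) :
  (forall y, differentiable f y) ->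
  (forall y, differentiable ('D_u f) y) ->
  differentiable ('D_w ('D_u f)) x -> 0 < eps ->
  \forall h \near 0^'+,
    `|second_difference f x u w h - 'D_w ('D_u f) x * h ^+ 2| <= eps * h ^+ 2.
Proof.
move=> df dDu dDwu eps0; set c := 'D_w ('D_u f) x.
have /cvgrPdist_lt /(_ eps eps0) /nbhs_normP [r r0 near_x] := differentiable_continuous dDwu.
set k := `|u| + `|w| + 1.
have k0 : 0 < k by rewrite /k ltr_wpDl ?addr_ge0.
near=> h; have h0 : 0 < h by near: h; exact: nbhs_right_gt.
have hk : h * k < r by rewrite -ltr_pdivlMr //; near: h; apply: nbhs_right_lt; rewrite divr_gt0.
have Dwu_near s t : 0 <= s <= h -> 0 <= t <= h ->
    `|'D_w ('D_u f) (x + s *: u + t *: w) - c| <= eps.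
  move=> /andP [s0 sh] /andP [t0 th]; rewrite distrC ltW // near_x //=.
  rewrite -addrA opprD addrA subrr add0r normrN.
  apply: le_lt_trans (ler_normD _ _) _; rewrite !normrZ !ger0_norm //.
  have := ler_wpM2r (normr_ge0 u) sh; have := ler_wpM2r (normr_ge0 w) th.
  by move: hk; rewrite /k; lra.
have inner s : 0 <= s <= h ->
    `|'D_u f (x + s *: u + h *: w) - 'D_u f (x + s *: u) - c * h| <= eps * h.
  move=> sh; have := @mvt_linear_approx (fun t => 'D_u f (x + s *: u + t *: w))
     (fun t => 'D_w ('D_u f) (x + s *: u + t *: w)) 0 h c eps h0.
  rewrite /= scale0r addr0 !subr0; apply.
    by move=> t; apply: is_derive_along_line; exact: diff_derivable.
  by move=> t /andP [t0 th]; rewrite Dwu_near // ?ltW.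
have := @mvt_linear_approx (fun s => f (x + h *: w + s *: u) - f (x + s *: u))
   (fun s => 'D_u f (x + h *: w + s *: u) - 'D_u f (x + s *: u)) 0 h (c * h) (eps * h) h0.
have -> : second_difference f x u w h =
    f (x + h *: w + h *: u) - f (x + h *: u) - (f (x + h *: w) - f x).
  by rewrite /second_difference; ring.
rewrite /= !scale0r !addr0 !subr0 -!mulrA -expr2; apply.
  by move=> t; apply: is_deriveB; apply: is_derive_along_line; exact: diff_derivable.
by move=> t /andP [t0 th]; rewrite (addrAC x) inner // !ltW.
Unshelve. all: by end_near.
Qed.

Lemma derive_dirC f u w x :
  (forall y, differentiable f y) ->
  (forall y, differentiable ('D_u f) y) ->
  (forall y, differentiable ('D_w f) y) ->
  differentiable ('D_w ('D_u f)) x -> differentiable ('D_u ('D_w f)) x ->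
  'D_w ('D_u f) x = 'D_u ('D_w f) x.
Proof.
move=> df dDu dDw dDwu dDuw.
apply/eqP; rewrite -subr_eq0 -normr_le0; apply/ler_addgt0Pr => e e0; rewrite add0r.
have e20 : 0 < e / 2 by rewrite divr_gt0.
have [h [[h0 approx_uw] approx_wu]] := filter_ex (filterI (filterI (nbhs_right_gt 0)
  (second_difference_approx df dDu dDwu e20)) (second_difference_approx df dDw dDuw e20)).
have hsym : second_difference f x w u h = second_difference f x u w h.
  by rewrite /second_difference (addrAC x); ring.
rewrite -(ler_pM2r (exprn_gt0 2 h0)).
set c1 := 'D_w _ x in approx_uw *; set c2 := 'D_u _ x in approx_wu *.
have -> : `|c1 - c2| * h ^+ 2 =
    `|(second_difference f x w u h - c2 * h ^+ 2) - (second_difference f x u w h - c1 * h ^+ 2)|.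
  set d := second_difference f x u w h.
  rewrite hsym (_ : d - c2 * h ^+ 2 - (d - c1 * h ^+ 2) = (c1 - c2) * h ^+ 2); last by ring.
  by rewrite normrM [`|h ^+ 2|]ger0_norm // exprn_ge0 // ltW.
rewrite [e in X in _ <= X]splitr mulrDl.
exact: le_trans (ler_normB _ _) (lerD approx_wu approx_uw).
Qed.

End Schwarz.

Section PartialDerivatives.
Variable R : realType.
Implicit Types (f g : 'rV[R]_4 -> R) (y : 'rV[R]_4).

Lemma ipd_rcons s c f : ipd (rcons s c) f = ipd s (pd c f).
Proof. by elim: s => //= m s ->. Qed.

Lemma smooth_pd f c : smooth f -> smooth (pd c f).
Proof. by move=> fs s x; rewrite -ipd_rcons; exact: fs. Qed.

Lemma pd_comm f a b : smooth f -> pd a (pd b f) = pd b (pd a f).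
Proof.
move=> fs; apply: funext => x.
exact: (derive_dirC (fs [::]) (fs [:: b]) (fs [:: a]) (fs [:: a; b] x) (fs [:: b; a] x)).
Qed.

(* An opaque alias of [pd]: comparing two distinct partial derivatives by
   conversion would unfold [derive] and never return. *)
Fact lpd_key : unit. Proof. by []. Qed.
Definition lpd : 'I_4 -> ('rV[R]_4 -> R) -> 'rV[R]_4 -> R := locked_with lpd_key (@pd R).
Lemma lpdE : lpd = @pd R. Proof. exact: unlock. Qed.

Lemma lpd_comm f a b : smooth f -> lpd a (lpd b f) = lpd b (lpd a f).
Proof. by rewrite lpdE; exact: pd_comm. Qed.

Lemma smooth_lpd f c : smooth f -> smooth (lpd c f).
Proof. by rewrite lpdE; exact: smooth_pd. Qed.

Lemma lpd_eq m y f g : f =1 g -> lpd m f y = lpd m g y.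
Proof. by move=> /funext ->. Qed.

Definition has_pd m y f (d : R) := differentiable f y /\ lpd m f y = d.

Lemma has_pdE m y f d : has_pd m y f d -> lpd m f y = d.
Proof. by case. Qed.

Lemma has_pd_diff m y f : differentiable f y -> has_pd m y f (lpd m f y).
Proof. by []. Qed.

Lemma has_pd_cst m y (c : R) : has_pd m y (fun _ => c) 0.
Proof. by rewrite /has_pd lpdE; split; [exact: differentiable_cst | exact: derive_cst]. Qed.

Lemma has_pd_add m y f g a b : has_pd m y f a -> has_pd m y g b ->
  has_pd m y (fun z => f z + g z) (a + b).
Proof.
rewrite /has_pd lpdE => -[df <-] [dg <-]; split; first exact: differentiableD.
exact: (deriveD (diff_derivable df) (diff_derivable dg)).
Qed.

Lemma has_pd_opp m y f a : has_pd m y f a -> has_pd m y (fun z => - f z) (- a).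
Proof.
rewrite /has_pd lpdE => -[df <-]; split; first exact: differentiableN.
exact: (deriveN (diff_derivable df)).
Qed.

Lemma has_pd_mul m y f g a b : has_pd m y f a -> has_pd m y g b ->
  has_pd m y (fun z => f z * g z) (f y * b + g y * a).
Proof.
rewrite /has_pd lpdE => -[df <-] [dg <-]; split; first exact: differentiableM.
exact: (deriveM (diff_derivable df) (diff_derivable dg)).
Qed.

End PartialDerivatives.

Section Potential.
Variable R : realType.
Notation pt := 'rV[R]_4.

Definition o1 : 'I_3 := Ordinal (isT : 1 < 3)%N.
Definition o2 : 'I_3 := Ordinal (isT : 2 < 3)%N.
Notation o0 := (ord0 : 'I_3).
Notation i0 := (ord0 : 'I_4).
Notation i1 := (sp o0).
Notation i2 := (sp o1).
Notation i3 := (sp o2).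

Lemma I3P (i : 'I_3) : [\/ i = o0, i = o1 | i = o2].
Proof.
by case: i => -[|[|[|//]]] ?; [constructor 1 | constructor 2 | constructor 3]; exact: val_inj.
Qed.

Lemma I4P (a : 'I_4) : [\/ a = i0, a = i1, a = i2 | a = i3].
Proof.
case: a => -[|[|[|[|//]]]] ?; [constructor 1 | constructor 2 | constructor 3 | constructor 4];
  exact: val_inj.
Qed.

(* Spatial sums written out, so that [ring] sees through nested sums, under
   whose binders [rewrite] cannot go. *)
Definition sum3 (f : 'I_3 -> R) : R := f o0 + f o1 + f o2.

Lemma big_ord3 (f : 'I_3 -> R) : \sum_(i < 3) f i = sum3 f.
Proof.
by rewrite !big_ord_recl big_ord0 addr0 !addrA; congr (_ + _ + _); congr f; exact: val_inj.
Qed.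

Lemma big_ord4 (f : 'I_4 -> R) : \sum_(a < 4) f a = f i0 + f i1 + f i2 + f i3.
Proof.
rewrite !big_ord_recl big_ord0 addr0 !addrA.
by congr (_ + _ + _ + _); congr f; exact: val_inj.
Qed.

Ltac case_I4 a := let H := fresh in case: (I4P a) => H; rewrite {a}H.

Variable Phi : pt -> R.
Hypothesis Phi_smooth : smooth Phi.

(* Mixed partial derivatives of [Phi] with the directions sorted, so that
   partial derivatives equal by Schwarz become the same atom for [ring]. *)
Definition pd2 (m n : 'I_4) (y : pt) : R :=
  if (m <= n)%N then lpd m (lpd n Phi) y else lpd n (lpd m Phi) y.

Definition pd3 (m a b : 'I_4) (y : pt) : R :=
  if (m <= a)%N then
    (if (a <= b)%N then lpd m (lpd a (lpd b Phi)) y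
     else if (m <= b)%N then lpd m (lpd b (lpd a Phi)) y else lpd b (lpd m (lpd a Phi)) y)
  else
    (if (m <= b)%N then lpd a (lpd m (lpd b Phi)) y
     else if (a <= b)%N then lpd a (lpd b (lpd m Phi)) y else lpd b (lpd a (lpd m Phi)) y).

Lemma pd2E m n y : lpd m (lpd n Phi) y = pd2 m n y.
Proof. by rewrite /pd2; case: ifP => _; last rewrite lpd_comm. Qed.

Lemma pd2C m n : pd2 m n = pd2 n m.
Proof. by apply: funext => y; rewrite -!pd2E lpd_comm. Qed.

Lemma pd3E m a b y : lpd m (lpd a (lpd b Phi)) y = pd3 m a b y.
Proof.
have S1 p q r : lpd p (lpd q (lpd r Phi)) = lpd q (lpd p (lpd r Phi)).
  exact: lpd_comm (smooth_lpd _ Phi_smooth).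
have S2 p q r : lpd p (lpd q (lpd r Phi)) = lpd p (lpd r (lpd q Phi)).
  by rewrite (lpd_comm q).
rewrite /pd3; case: ifP => _; case: ifP => _; try case: ifP => _.
- by [].
- by rewrite S2.
- by rewrite S2 S1.
- by rewrite S1.
- by rewrite S1 S2.
- by rewrite S1 S2 S1.
Qed.

Lemma has_pd_dPhi m n y : has_pd m y (fun z => lpd n Phi z) (pd2 m n y).
Proof. by rewrite -pd2E; apply: has_pd_diff; rewrite lpdE; exact: (Phi_smooth [:: _]). Qed.

Lemma has_pd_pd2 k m n y : has_pd k y (fun z => pd2 m n z) (pd3 k m n y).
Proof.
rewrite -pd3E (_ : (fun z => pd2 m n z) = lpd m (lpd n Phi)); last first.
  by apply: funext => z; rewrite pd2E.
by apply: has_pd_diff; rewrite lpdE; exact: (Phi_smooth [:: _; _]).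
Qed.

Ltac solve_has_pd := lazymatch goal with
 | |- has_pd _ _ (fun z => @?f z + @?g z) _ =>
     apply: (@has_pd_add _ _ _ f g); [solve_has_pd | solve_has_pd]
 | |- has_pd _ _ (fun z => - @?f z) _ => apply: (@has_pd_opp _ _ _ f); solve_has_pd
 | |- has_pd _ _ (fun z => @?f z * @?g z) _ =>
     apply: (@has_pd_mul _ _ _ f g); [solve_has_pd | solve_has_pd]
 | |- has_pd _ _ (fun z => lpd _ Phi z) _ => apply: has_pd_dPhi
 | |- has_pd _ _ (fun z => pd2 _ _ z) _ => apply: has_pd_pd2
 | |- _ => apply: has_pd_cst
end.

Ltac ring_pd :=
  repeat match goal with |- context [lpd ?m ?f ?y] => generalize (lpd m f y); intro end;
  first [ring | field; rewrite ?pnatr_eq0 //].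

Definition metricPhi := adm_metric (fun _ => 1) (fun x i => - pd (sp i) Phi x).

Notation d_ a b := ((a == b)%:R : R).
Notation d0 a := (d_ a i0).

Definition dPhi (i : 'I_3) (y : pt) : R := lpd (sp i) Phi y.
Definition gradPhi (a : 'I_4) (y : pt) : R := sum3 (fun i => d_ a (sp i) * dPhi i y).

Definition dmetric (m a b : 'I_4) (y : pt) : R :=
  sum3 (fun i => pd2 m (sp i) y * d0 a * (d_ b (sp i) + dPhi i y * d0 b)
    + (d_ a (sp i) + dPhi i y * d0 a) * (pd2 m (sp i) y * d0 b)).

Lemma lpd_metricPhi m a b y : lpd m (fun z => metricPhi z a b) y = dmetric m a b y.
Proof.
erewrite lpd_eq; last first.
  by move=> z; rewrite /metricPhi /adm_metric mxE big_ord3 -lpdE /sum3.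
erewrite has_pdE; last by solve_has_pd.
rewrite /dmetric /sum3 /dPhi.
move: (pd2 m i1 y) (pd2 m i2 y) (pd2 m i3 y) => *; ring_pd.
Qed.

Definition metric_inv (y : pt) : 'M[R]_4 := \matrix_(a, b)
  (- d0 a * d0 b + d0 a * gradPhi b y + gradPhi a y * d0 b
   + sum3 (fun i => d_ a (sp i) * d_ b (sp i)) - gradPhi a y * gradPhi b y).

Lemma ginv_metricPhi y : ginv metricPhi y = metric_inv y.
Proof.
have gK : metricPhi y *m metric_inv y = 1%:M.
  apply/matrixP => a b; rewrite !mxE big_ord4 /metricPhi /adm_metric /metric_inv /gradPhi /dPhi.
  rewrite !mxE !big_ord3 /sum3 -lpdE.
  by case_I4 a; case_I4 b; rewrite /=; ring_pd.
by rewrite /ginv -[RHS](mulKmx (mulmx1_unit gK).1) gK mulmx1.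
Qed.

Definition hess (i j : 'I_3) (y : pt) : R := pd2 (sp i) (sp j) y.
Definition slice_proj (b : 'I_4) (i : 'I_3) (y : pt) : R := d_ b (sp i) + d0 b * dPhi i y.
Definition hess_proj (b c : 'I_4) (y : pt) : R :=
  sum3 (fun i => sum3 (fun j => slice_proj b i y * slice_proj c j y * hess i j y)).
Definition dn_dPhi (a : 'I_4) (y : pt) : R :=
  sum3 (fun k => d_ a (sp k) * (pd2 i0 (sp k) y - sum3 (fun l => hess k l y * dPhi l y))).

(* Gamma^a_bc = - n^a Hess Phi (P e_b, P e_c) + [b = c = 0] n(d_a Phi), where
   n = (1, - grad Phi) is the unit normal, P the projection along n onto the
   slice, and d_0 Phi counts as 0. *)
Definition Gamma (a b c : 'I_4) (y : pt) : R :=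
  - (d0 a - gradPhi a y) * hess_proj b c y + dn_dPhi a y * d0 b * d0 c.

Ltac unfold_Gamma := rewrite /Gamma /hess_proj /dn_dPhi /slice_proj /gradPhi /hess /dPhi /sum3.

Lemma christoffel_metricPhi : christoffel metricPhi = Gamma.
Proof.
apply: funext => a; apply: funext => b; apply: funext => c; apply: funext => y.
rewrite /christoffel big_ord4 ginv_metricPhi -lpdE !lpd_metricPhi.
rewrite /metric_inv /dmetric !mxE; unfold_Gamma.
by case_I4 a; case_I4 b; case_I4 c; rewrite /= /pd2 /=; ring_pd.
Qed.

Lemma Gamma_sym a b c : Gamma a b c = Gamma a c b.
Proof.
apply: funext => y; rewrite /Gamma /hess_proj /sum3 /hess /slice_proj.
rewrite (pd2C i2 i1) (pd2C i3 i1) (pd2C i3 i2).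
move: (pd2 _ _ _) (pd2 _ _ _) (pd2 _ _ _) (pd2 _ _ _) (pd2 _ _ _) (pd2 _ _ _) => *.
by move: (dPhi _ _) (dPhi _ _) (dPhi _ _) => *; ring.
Qed.

Lemma trace_Gamma b y : \sum_(a < 4) Gamma a a b y = 0.
Proof.
rewrite big_ord4; unfold_Gamma.
by case_I4 b; rewrite /= /pd2 /=; ring_pd.
Qed.

Lemma differentiable_Gamma a b c y : differentiable (Gamma a b c) y.
Proof.
have [d [dG _]] : exists d, has_pd i0 y (Gamma a b c) d.
  by eexists; unfold_Gamma; cbv beta; solve_has_pd.
exact: dG.
Qed.

(* [ricci] without its terms involving the trace Gamma^a_ab, which vanishes. *)
Definition Ric (x : pt) (b d : 'I_4) : R :=
  \sum_(a < 4) lpd a (Gamma a d b) x - \sum_(a < 4) \sum_(e < 4) Gamma a d e x * Gamma e a b x.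

Lemma ricci_metricPhi x b d : ricci metricPhi x b d = Ric x b d.
Proof.
rewrite /ricci mxE christoffel_metricPhi -lpdE.
have dtrace : \sum_(a < 4) lpd d (Gamma a a b) x = 0.
  rewrite lpdE /pd -derive_sum => [|a]; last exact/diff_derivable/differentiable_Gamma.
  have -> : \sum_(a < 4) Gamma a a b = fun=> 0.
    by apply/funext => z; rewrite fct_sumE trace_Gamma.
  exact: derive_cst.
have trace_prod : \sum_(a < 4) \sum_(e < 4) Gamma a a e x * Gamma e d b x = 0.
  by rewrite exchange_big; apply: big1 => e _; rewrite -mulr_suml trace_Gamma mul0r.
rewrite big_split /= sumrB dtrace subr0.
under eq_bigr => a _ do rewrite sumrB.
by rewrite sumrB trace_prod sub0r.
Qed.

Lemma Ric_sym x b d : Ric x b d = Ric x d b.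
Proof.
rewrite /Ric; congr (_ - _); first by apply: eq_bigr => a _; rewrite Gamma_sym.
rewrite exchange_big; apply: eq_bigr => a _; apply: eq_bigr => e _.
by rewrite (Gamma_sym e d a) (Gamma_sym a e b) mulrC.
Qed.

Lemma lpd_unfold m y (f g : pt -> R) d : f =1 g -> has_pd m y g d -> lpd m f y = d.
Proof. by move=> /lpd_eq -> /has_pdE. Qed.

Ltac expand_lpd_Gamma := match goal with |- context [lpd ?m (Gamma ?a ?b ?c) ?y] =>
  erewrite (@lpd_unfold m y (Gamma a b c));
  [| by move=> z; unfold_Gamma; rewrite /= | solve_has_pd] end.

Lemma momentum_constraint x i :
  Ric x (sp i) i0 - sum3 (fun j => dPhi j x * Ric x (sp i) (sp j)) = 0.
Proof.
rewrite /Ric /sum3 !big_ord4.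
case: (I3P i) => ->; repeat expand_lpd_Gamma;
  by unfold_Gamma; rewrite /= /pd2 /pd3 /=; ring_pd.
Qed.

(* Columns: the unit normal n, then the coordinate directions d_1, d_2, d_3. *)
Definition frame (x : pt) : 'M[R]_4 := \matrix_(a, b) (d_ a b - d0 b * gradPhi a x).

Lemma frame_orthonormal x : (frame x)^T *m metricPhi x *m frame x = minkowski_mx R.
Proof.
apply/matrixP => a b; rewrite /metricPhi /adm_metric /minkowski_mx /frame /gradPhi /dPhi -lpdE.
rewrite !mxE !big_ord4 !mxE !big_ord4 !mxE !big_ord3 /sum3.
by case_I4 a; case_I4 b; rewrite /=; ring_pd.
Qed.

Lemma ricci_metricPhi_sym x : (ricci metricPhi x)^T = ricci metricPhi x.
Proof. by apply/matrixP => a b; rewrite mxE !ricci_metricPhi Ric_sym. Qed.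

Lemma frame_ricci_mixed x i :
  ((frame x)^T *m ricci metricPhi x *m frame x) (lift ord0 i) ord0 = 0.
Proof.
rewrite -(momentum_constraint x i) !mxE !big_ord4 !mxE !big_ord4 !ricci_metricPhi.
rewrite /frame !mxE /gradPhi /sum3.
case: (I3P i) => -> /=;
  repeat match goal with |- context [Ric ?x ?a ?b] => generalize (Ric x a b); intro end;
  rewrite /dPhi; ring_pd.
Qed.

End Potential.

Theorem proposition2 (R : realType) (kappa : R) (Phi : 'rV[R]_4 -> R) :
  0 < kappa -> smooth Phi ->
  let g := adm_metric (fun _ => 1) (fun x i => - pd (sp i) Phi x) in
  forall x : 'rV[R]_4,
    HE_typeI (g x) (kappa^-1 *: einstein_mixed g x).
Proof.
move=> _ Phi_smooth g x; apply: typeI_of_frame.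
- exact: frame_orthonormal.
- exact: ricci_metricPhi_sym.
- exact: frame_ricci_mixed.
Qed.
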